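(* Assume the setting in the context, with a decomposition of $\mathcal X$ over $A$, $g\in\mathcal G_s$ and an integer $T>0$, and assume that $$\operatorname*{argmin}_{u\in\mathcal U} J^*_{t+1}(Ax+Bu)\cap\Big[\bigoplus_{i\in\mathcal I}\mathcal E_i\Big]\neq\emptyset\quad\text{for all }x\in\mathcal X,\ t\in\{0,\dots,T-1\}.$$ Then $J^*_t\in\mathcal G_s$ for every $t\in\{0,1,\dots,T\}$.
   Context: Let $\mathcal F$ be a field and $\mathcal X,\mathcal U$ finite-dimensional vector spaces over $\mathcal F$. Let $A:\mathcal X\to\mathcal X$ and $B:\mathcal U\to\mathcal X$ be linear maps with $B$ injective, and let $g:\mathcal X\to\mathbb R_{\ge0}$ satisfy $g(x)=0\iff x=0$. Standing assumption: all minima appearing below are attained. For the finite-horizon problem $(A,B,g,T)$ associated with the system $x_{t+1}=Ax_t+Bu_t$, the cost-to-go functions are defined by $J^*_T=g$ and $J^*_t(x)=g(x)+\min_{u\in\mathcal U}J^*_{t+1}(Ax+Bu)$ for $t=0,\dots,T-1$. A decomposition of $\mathcal X$ over $A$ is a direct sum $\mathcal X=\mathcal X_1\oplus\cdots\oplus\mathcal X_r$ with $r>1$ and $A\mathcal X_i\subseteq\mathcal X_i$ for all $i\in\mathcal I=\{1,\dots,r\}$; $\rho_i:\mathcal X\to\mathcal X_i$ is the projection along the other summands. $\mathcal G_s$ is the set of $h:\mathcal X\to\mathbb R_{\ge0}$ with $h(x)=\sum_i h(\rho_i(x))$ for all $x$. $\mathcal E_i=\{u\in\mathcal U:Bu\in\mathcal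 X_i\}$. *)

(* Real-number operations are written with explicit names (Rle, Rplus, R0) to avoid
   the %R scope clash between ring_scope and R_scope. *)
From Stdlib Require Import Reals.
From HB Require Import structures.
From mathcomp Require Import all_boot all_order all_algebra.
Set Implicit Arguments. Unset Strict Implicit. Unset Printing Implicit Defensive.
Import GRing.Theory.
Local Open Scope ring_scope.

Definition decomposition (F : fieldType) (X : vectType F) (A : 'End(X))
    (r : nat) (Xs : 'I_r -> {vspace X}) : Prop :=
  (1 < r)%N /\ directv (\sum_(i < r) Xs i)%VS /\ (\sum_(i < r) Xs i)%VS = fullv
  /\ forall i, (A @: Xs i <= Xs i)%VS.

Definition rho (F : fieldType) (X : vectType F) (r : nat)
    (Xs : 'I_r -> {vspace X}) (i : 'I_r) : 'End(X) :=
  sumv_pi (\sum_(j < r) Xs j)%VS i.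

Definition in_Gs (F : fieldType) (X : vectType F) (r : nat)
    (Xs : 'I_r -> {vspace X}) (h : X -> R) : Prop :=
  (forall x, Rle R0 (h x)) /\
  forall x, h x = \big[Rplus/R0]_(i < r) h (rho Xs i x).

Definition Espace (F : fieldType) (X U : vectType F) (B : 'Hom(U, X)) (r : nat)
    (Xs : 'I_r -> {vspace X}) (i : 'I_r) : {vspace U} :=
  (B @^-1: Xs i)%VS.

Definition is_min_value (T : Type) (f : T -> R) (m : R) : Prop :=
  (exists u, f u = m) /\ forall u, Rle m (f u).

Definition in_argmin (T : Type) (f : T -> R) (u : T) : Prop :=
  forall v, Rle (f u) (f v).

Definition cost_to_go (F : fieldType) (X U : vectType F) (A : 'End(X))
    (B : 'Hom(U, X)) (g : X -> R) (T : nat) (J : nat -> X -> R) : Prop :=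
  J T = g /\
  forall t, (t < T)%N -> forall x, exists m,
    is_min_value (fun u => J t.+1 (A x + B u)) m /\ J t x = Rplus (g x) m.

(* The Bellman recursion J_t = g + min_u J_{t+1}(A . + B u) preserves additivity over the
   A-invariant summands.  If J_{t+1} is additive and some minimiser u at x splits as
   u = sum_i e_i with B e_i in X_i, then A x + B u splits into the components
   A (rho_i x) + B e_i, so the minimum at x dominates the sum of the minima at the rho_i x.
   Conversely, a minimiser at rho_i x splits in the same way; since J_{t+1} is additive and
   nonnegative, keeping only its i-th piece can only lower the cost, and these i-th pieces
   add up to an admissible input at x. *)
From Stdlib Require Import Reals Lra.
From HB Require Import structures.
From mathcomp Require Import all_boot all_order all_algebra.
Set Implicit Arguments. Unset Strict Implicit. Unset Printing Implicit Defensive.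
Import GRing.Theory.
Local Open Scope ring_scope.

HB.instance Definition _ :=
  Monoid.isComLaw.Build R R0 Rplus (fun a b c => esym (Rplus_assoc a b c)) Rplus_comm Rplus_0_l.

Section RealSums.
Variable I : finType.

Lemma Rsum_le_compat (a b : I -> R) : (forall i, Rle (a i) (b i)) ->
  Rle (\big[Rplus/R0]_i a i) (\big[Rplus/R0]_i b i).
Proof.
move=> le_ab; apply: (big_ind2 Rle) => //; first exact: Rle_refl.
by move=> *; apply: Rplus_le_compat.
Qed.

Lemma Rsum_ge_term (a : I -> R) i : (forall j, Rle R0 (a j)) ->
  Rle (a i) (\big[Rplus/R0]_j a j).
Proof.
move=> a_ge0; rewrite (bigD1 i) //= -{1}(Rplus_0_r (a i)).
apply: Rplus_le_compat_l; apply: (big_ind (Rle R0)) => //; first exact: Rle_refl.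
by move=> x y x_ge0 y_ge0; rewrite -(Rplus_0_l R0); apply: Rplus_le_compat.
Qed.

End RealSums.

Lemma eq_Gs (F : fieldType) (X : vectType F) (r : nat) (Xs : 'I_r -> {vspace X})
    (h1 h2 : X -> R) : h1 =1 h2 -> in_Gs Xs h1 -> in_Gs Xs h2.
Proof.
move=> eq_h [h1_ge0 h1_sum]; split=> [x|x]; rewrite -eq_h //.
by rewrite h1_sum; apply: eq_bigr => i _; rewrite eq_h.
Qed.

Lemma Gs_add (F : fieldType) (X : vectType F) (r : nat) (Xs : 'I_r -> {vspace X})
    (h1 h2 : X -> R) : in_Gs Xs h1 -> in_Gs Xs h2 ->
  in_Gs Xs (fun x => Rplus (h1 x) (h2 x)).
Proof.
move=> [h1_ge0 h1_sum] [h2_ge0 h2_sum]; split=> x.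
  by have := h1_ge0 x; have := h2_ge0 x; lra.
by rewrite big_split /= -h1_sum -h2_sum.
Qed.

Section DirectSum.
Variables (F : fieldType) (X : vectType F) (r : nat) (Xs : 'I_r -> {vspace X}).
Hypothesis Xs_direct : directv (\sum_(i < r) Xs i)%VS.
Hypothesis Xs_full : (\sum_(i < r) Xs i)%VS = fullv.

Lemma rho_sum x : \sum_(i < r) rho Xs i x = x.
Proof. by apply: sumv_pi_sum; rewrite Xs_full memvf. Qed.

Lemma rho_sum_mem (y : 'I_r -> X) : (forall i, y i \in Xs i) ->
  forall j, rho Xs j (\sum_(i < r) y i) = y j.
Proof.
move=> y_mem j.
have /directv_sum_unique/(_ _ y) := Xs_direct.
move=> /(_ (fun i => rho Xs i (\sum_(i < r) y i))).
move=> /(_ (fun i _ => memv_sum_pi _ _ _) (fun i _ => y_mem i)).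
by rewrite rho_sum eqxx => /esym/forallP/(_ j)/implyP/(_ isT)/eqP.
Qed.

Lemma rho_id i v : v \in Xs i -> rho Xs i v = v.
Proof.
move=> v_mem; pose y j := if j == i then v else 0.
have y_sum : \sum_(j < r) y j = v by rewrite -big_mkcond big_pred1_eq.
rewrite -{1}y_sum rho_sum_mem /y ?eqxx // => j.
by case: (eqVneq j i) => [->|_]; rewrite ?rpred0.
Qed.

Lemma Gs_sum (h : X -> R) : in_Gs Xs h -> forall y : 'I_r -> X,
  (forall i, y i \in Xs i) -> h (\sum_(i < r) y i) = \big[Rplus/R0]_(i < r) h (y i).
Proof.
move=> [_ h_sum] y y_mem; rewrite h_sum.
by apply: eq_bigr => i _; rewrite rho_sum_mem.
Qed.

End DirectSum.

Lemma memv_sum_Espace (F : fieldType) (X U : vectType F) (B : 'Hom(U, X)) (r : nat)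
    (Xs : 'I_r -> {vspace X}) u :
  u \in (\sum_(i < r) Espace B Xs i)%VS ->
  exists2 e : 'I_r -> U, forall i, B (e i) \in Xs i & u = \sum_(i < r) e i.
Proof.
move=> /memv_sumP[e e_mem ->]; exists e => // i.
by rewrite memv_preim; apply: e_mem.
Qed.

Section ValueFunction.
Variables (F : fieldType) (X U : vectType F) (A : 'End(X)) (B : 'Hom(U, X)).
Variables (r : nat) (Xs : 'I_r -> {vspace X}) (Jn V : X -> R).
Hypothesis Xs_direct : directv (\sum_(i < r) Xs i)%VS.
Hypothesis Xs_full : (\sum_(i < r) Xs i)%VS = fullv.
Hypothesis A_invariant : forall i, (A @: Xs i <= Xs i)%VS.
Hypothesis Jn_Gs : in_Gs Xs Jn.
Hypothesis V_le : forall x u, Rle (V x) (Jn (A x + B u)).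
Hypothesis V_attained : forall x, exists2 e : 'I_r -> U,
  forall i, B (e i) \in Xs i & Jn (A x + B (\sum_(i < r) e i)) = V x.

Lemma Arho_mem i x : A (rho Xs i x) \in Xs i.
Proof. exact/(subvP (A_invariant i))/memv_img/memv_sum_pi. Qed.

Lemma Jn_split x (e : 'I_r -> U) : (forall i, B (e i) \in Xs i) ->
  Jn (A x + B (\sum_(i < r) e i)) =
  \big[Rplus/R0]_(i < r) Jn (A (rho Xs i x) + B (e i)).
Proof.
move=> e_mem; rewrite linear_sum -{1}(rho_sum Xs_full x) linear_sum -big_split /=.
by rewrite (Gs_sum Xs_direct Xs_full Jn_Gs) // => i; rewrite rpredD ?Arho_mem.
Qed.

Lemma V_ge_sum x : Rle (\big[Rplus/R0]_(i < r) V (rho Xs i x)) (V x).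
Proof.
have [e e_mem <-] := V_attained x.
by rewrite Jn_split //; apply: Rsum_le_compat => i; apply: V_le.
Qed.

Lemma V_le_sum x : Rle (V x) (\big[Rplus/R0]_(i < r) V (rho Xs i x)).
Proof.
have [E E_mem E_min] := fin_all_exists2 (fun i => V_attained (rho Xs i x)).
have piece_le i : Rle (Jn (A (rho Xs i x) + B (E i i))) (V (rho Xs i x)).
  rewrite -E_min Jn_split // -{1}(rho_id Xs_direct Xs_full (memv_sum_pi _ i x)).
  have := @Rsum_ge_term _ (fun j => Jn (A (rho Xs j (rho Xs i x)) + B (E i j))) i.
  by apply=> j; apply: (proj1 Jn_Gs).
apply: Rle_trans (V_le x (\sum_(i < r) E i i)) _.
by rewrite Jn_split //; apply: Rsum_le_compat.
Qed.

Lemma V_Gs : in_Gs Xs V.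
Proof.
split=> [x|x]; last by apply: Rle_antisym; [apply: V_le_sum | apply: V_ge_sum].
by have [e _ <-] := V_attained x; case: Jn_Gs.
Qed.

End ValueFunction.

Lemma downward_ind (P : nat -> Prop) (T : nat) :
  P T -> (forall t, (t < T)%N -> P t.+1 -> P t) -> forall t, (t <= T)%N -> P t.
Proof.
move=> PT P_step t le_tT; rewrite -(subKn le_tT).
elim: (T - t)%N (leq_subr t T) => [|k IHk] le_kT; first by rewrite subn0.
have lt_T : (T - k.+1 < T)%N by rewrite ltn_subrL (leq_trans _ le_kT).
by apply: P_step => //; rewrite subnSK //; apply/IHk/ltnW.
Qed.

Theorem proposition2 (F : fieldType) (X U : vectType F)
    (A : 'End(X)) (B : 'Hom(U, X)) (g : X -> R)
    (r : nat) (Xs : 'I_r -> {vspace X}) (T : nat) (J : nat -> X -> R) :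
  injective B ->
  (forall x, Rle R0 (g x)) ->
  (forall x, g x = R0 <-> x = 0) ->
  decomposition A Xs ->
  in_Gs Xs g ->
  (0 < T)%N ->
  cost_to_go A B g T J ->
  (forall x t, (t < T)%N ->
     exists u, in_argmin (fun v => J t.+1 (A x + B v)) u /\
               u \in (\sum_(i < r) Espace B Xs i)%VS) ->
  forall t, (t <= T)%N -> in_Gs Xs (J t).
Proof.
move=> _ _ _ [_ [Xs_direct [Xs_full A_invariant]]] g_Gs _ [JT J_step] argmin_split.
apply: downward_ind; first by rewrite JT.
move=> t lt_tT Jt1_Gs.
pose V x := Rminus (J t x) (g x).
have V_min x : is_min_value (fun u => J t.+1 (A x + B u)) (V x).
  rewrite /V; have [m [m_min ->]] := J_step t lt_tT x.
  by have -> : Rminus (Rplus (g x) m) (g x) = m by lra.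
have V_le x u : Rle (V x) (J t.+1 (A x + B u)) by case: (V_min x).
have V_attained x : exists2 e : 'I_r -> U, forall i, B (e i) \in Xs i &
    J t.+1 (A x + B (\sum_(i < r) e i)) = V x.
  have [u [u_min /memv_sum_Espace[e e_mem u_sum]]] := argmin_split x t lt_tT.
  exists e => //; rewrite -u_sum; apply: Rle_antisym; last exact: V_le.
  by have [[v <-] _] := V_min x; apply: u_min.
apply: (eq_Gs (h1 := fun x => Rplus (g x) (V x))); first by move=> x; rewrite /V Rplus_minus.
exact/(Gs_add g_Gs)/(V_Gs Xs_direct Xs_full A_invariant Jt1_Gs V_le V_attained).
Qed.
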